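(* Let $\mathcal{X}\subset\mathbb{R}^d$ be a convex compact set with non-empty interior, let $k\ge 0$ and let $f\in\mathrm{Lip}(k)$. Let $t\ge1$ and let $x_1,\dots,x_t\in\mathcal{X}$ be evaluated points. Then for every $\varepsilon\in(0,k]$ we have $\mathcal{A}_{\varepsilon,t}\subseteq\mathcal{P}_{k,t}$, and for every $\varepsilon>k$ we have $\mathcal{P}_{k,t}\subseteq\mathcal{A}_{\varepsilon,t}$.
   Context: $\mathrm{Lip}(k)=\{g:\mathcal{X}\to\mathbb{R}:\ |g(x)-g(x')|\le k\|x-x'\|_2\ \forall x,x'\in\mathcal{X}\}$. For $\varepsilon>0$, the acceptance region is $\mathcal{A}_{\varepsilon,t}=\{x\in\mathcal{X}: \min_{i=1,\dots,t}(f(x_i)+\varepsilon\|x-x_i\|_2)\ge\max_{j=1,\dots,t}f(x_j)\}$. The set of consistent functions is $\mathcal{F}_{k,t}=\{g\in\mathrm{Lip}(k): g(x_i)=f(x_i)\ \forall i\in\{1,\dots,t\}\}$, and the set of potential maximizers is $\mathcal{P}_{k,t}=\{x\in\mathcal{X}:\ \exists g\in\mathcal{F}_{k,t}\text{ with } x\in\arg\max_{x'\in\mathcal{X}}g(x')\}$. *)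

From mathcomp Require Import all_boot all_order all_algebra.
From mathcomp Require Import all_classical all_reals all_analysis.
Set Implicit Arguments. Unset Strict Implicit. Unset Printing Implicit Defensive.
Import Order.TTheory GRing.Theory Num.Theory.
Import numFieldNormedType.Exports.
Local Open Scope classical_set_scope.
Local Open Scope ring_scope.

Definition enorm (R : realType) (d : nat) (v : 'rV[R]_d) : R :=
  Num.sqrt (\sum_(i < d) v ord0 i ^+ 2).

(* g is k-Lipschitz on X (w.r.t. the Euclidean norm); functions on X are
   represented as total functions whose values outside X are irrelevant. *)
Definition Lip_on (R : realType) (d : nat) (X : set 'rV[R]_d) (k : R)
    (g : 'rV[R]_d -> R) : Prop :=
  forall x x', X x -> X x' -> `|g x - g x'| <= k * enorm (x - x').

(* Acceptance region A_{eps,t}: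
   min_i (f x_i + eps ||x - x_i||) >= max_j f x_j, written out as:
   for all i and j, f x_i + eps ||x - x_i|| >= f x_j. *)
Definition accept_region (R : realType) (d : nat) (X : set 'rV[R]_d)
    (f : 'rV[R]_d -> R) (t : nat) (xs : 'I_t -> 'rV[R]_d) (eps : R)
    : set 'rV[R]_d :=
  [set x | X x /\ forall i j : 'I_t, f (xs j) <= f (xs i) + eps * enorm (x - xs i)].

Definition consistent_funs (R : realType) (d : nat) (X : set 'rV[R]_d)
    (f : 'rV[R]_d -> R) (t : nat) (xs : 'I_t -> 'rV[R]_d) (k : R)
    : set ('rV[R]_d -> R) :=
  [set g | Lip_on X k g /\ forall i : 'I_t, g (xs i) = f (xs i)].

Definition is_argmax (R : realType) (d : nat) (X : set 'rV[R]_d)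
    (g : 'rV[R]_d -> R) (x : 'rV[R]_d) : Prop :=
  X x /\ forall x', X x' -> g x' <= g x.

Definition potential_max (R : realType) (d : nat) (X : set 'rV[R]_d)
    (f : 'rV[R]_d -> R) (t : nat) (xs : 'I_t -> 'rV[R]_d) (k : R)
    : set 'rV[R]_d :=
  [set x | X x /\ exists g, consistent_funs X f xs k g /\ is_argmax X g x].

From mathcomp Require Import all_boot all_order all_algebra.
From mathcomp Require Import all_classical all_reals all_analysis.
From mathcomp Require Import ring lra.
Import Order.TTheory GRing.Theory Num.Theory.
Import numFieldNormedType.Exports.
Local Open Scope classical_set_scope.
Local Open Scope ring_scope.

(* A consistent function g is k-Lipschitz and agrees with f at the x_i, so at a
   maximizer x of g we get f(x_j) = g(x_j) <= g(x) <= f(x_i) + k |x - x_i|,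
   i.e. P_{k,t} is contained in A_{k,t}.  Conversely, for x in A_{k,t} pick a
   level c between max_j f(x_j) and min_i (f(x_i) + k |x - x_i|); McShane's
   extension min_i (f(x_i) + k |. - x_i|) truncated at c is consistent and
   attains its maximum c at x, so A_{k,t} is contained in P_{k,t}.  Both claims
   follow because A_{eps,t} grows with eps. *)

Lemma cauchy_schwarz_sum (R : realDomainType) (I : finType) (a b : I -> R) :
  (\sum_i a i * b i) ^+ 2 <= (\sum_i a i ^+ 2) * (\sum_i b i ^+ 2).
Proof.
have lagrange : \sum_i \sum_j (a i * b j - a j * b i) ^+ 2 =
    2 * ((\sum_i a i ^+ 2) * (\sum_j b j ^+ 2) - (\sum_i a i * b i) ^+ 2).
  transitivity (\sum_i \sum_j (a i ^+ 2 * b j ^+ 2) + \sum_i \sum_j (a j ^+ 2 * b i ^+ 2)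
                - 2 * \sum_i \sum_j (a i * b i) * (a j * b j)).
    rewrite mulr_sumr -big_split -sumrB; apply: eq_bigr => i _.
    by rewrite mulr_sumr -big_split -sumrB; apply: eq_bigr => j _ /=; ring.
  by rewrite [X in _ + X - _]exchange_big -!big_distrlr /=; ring.
have : 0 <= \sum_i \sum_j (a i * b j - a j * b i) ^+ 2.
  by apply: sumr_ge0 => i _; apply: sumr_ge0 => j _; exact: sqr_ge0.
by rewrite lagrange pmulr_rge0 // subr_ge0.
Qed.

Section EuclideanNorm.
Context {R : realType} {d : nat}.
Implicit Types u v x y : 'rV[R]_d.

Lemma enorm_ge0 v : 0 <= enorm v.
Proof. exact: sqrtr_ge0. Qed.

Lemma enorm0 : enorm (0 : 'rV[R]_d) = 0.
Proof. by rewrite /enorm big1 ?sqrtr0 // => i _; rewrite mxE expr0n. Qed.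

Lemma enorm_distC x y : enorm (x - y) = enorm (y - x).
Proof.
by rewrite /enorm -opprB; congr Num.sqrt; apply: eq_bigr => i _; rewrite mxE sqrrN.
Qed.

Lemma ler_enormD u v : enorm (u + v) <= enorm u + enorm v.
Proof.
rewrite /enorm; set A := \sum_i u ord0 i ^+ 2; set B := \sum_i v ord0 i ^+ 2.
have sqr_sum_ge0 w : 0 <= \sum_i w ord0 i ^+ 2 :> R.
  by apply: sumr_ge0 => i _; exact: sqr_ge0.
have expand : \sum_i (u + v) ord0 i ^+ 2 = A + B + 2 * \sum_i u ord0 i * v ord0 i.
  by rewrite mulr_sumr -!big_split; apply: eq_bigr => i _; rewrite mxE /=; ring.
have cross : \sum_i u ord0 i * v ord0 i <= Num.sqrt A * Num.sqrt B.
  rewrite -sqrtrM ?sqr_sum_ge0 // (le_trans (ler_norm _)) // -sqrtr_sqr.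
  by rewrite ler_sqrt ?mulr_ge0 ?sqr_sum_ge0 //; exact: cauchy_schwarz_sum.
rewrite -ler_sqr ?nnegrE ?addr_ge0 ?sqrtr_ge0 // sqr_sqrtr ?sqr_sum_ge0 //.
rewrite expand sqrrD !sqr_sqrtr ?sqr_sum_ge0 //; lra.
Qed.

End EuclideanNorm.

Lemma exists_between {R : realDomainType} {I J : finType} {a : J -> R} {b : I -> R} :
  (forall i j, a j <= b i) ->
  exists c, (forall j, a j <= c) /\ (forall i, c <= b i).
Proof.
move=> le_ab; exists (\big[Num.max/(\big[Num.min/0]_i b i)]_j a j); split.
  by move=> j; exact: le_bigmax.
move=> i; apply: bigmax_le => [|j _]; [exact: bigmin_le | exact: le_ab].
Qed.

Section Lipschitz.
Context {R : realType} {d : nat} {X : set 'rV[R]_d} {k : R}.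
Hypothesis k_ge0 : 0 <= k.

Lemma Lip_onP (g : 'rV[R]_d -> R) :
  Lip_on X k g <-> forall x x', X x -> X x' -> g x <= g x' + k * enorm (x - x').
Proof.
split=> [Lg x x' Xx Xx' | le_g x x' Xx Xx'].
  by rewrite -lerBlDl; apply: ler_normlW; rewrite distrC enorm_distC Lg.
have := le_g _ _ Xx Xx'; have := le_g _ _ Xx' Xx.
by rewrite ler_norml [enorm (x' - x)]enorm_distC => *; apply/andP; split; lra.
Qed.

Lemma Lip_on_cone (a : R) (p : 'rV[R]_d) : Lip_on X k (fun y => a + k * enorm (y - p)).
Proof.
apply/Lip_onP => x x' _ _; rewrite -addrA lerD2l -mulrDr ler_wpM2l //.
have -> : x - p = (x - x') + (x' - p) by rewrite addrA subrK.
by rewrite addrC ler_enormD.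
Qed.

Lemma Lip_on_bigmin (I : finType) (c : R) (F : I -> 'rV[R]_d -> R) :
  (forall i, Lip_on X k (F i)) -> Lip_on X k (fun y => \big[Num.min/c]_i F i y).
Proof.
move=> LF; apply/Lip_onP => x x' Xx Xx'; rewrite -lerBlDr.
have dist_ge0 : 0 <= k * enorm (x - x') by rewrite mulr_ge0 ?enorm_ge0.
apply: le_bigmin => [|i _].
  by rewrite lerBlDr (le_trans (bigmin_le_id _ _ _ _)) // lerDl.
rewrite lerBlDr (le_trans (bigmin_le _ i _)) //.
by move/Lip_onP: (LF i); apply.
Qed.

End Lipschitz.

Section AcceptanceRegion.
Context {R : realType} {d : nat} {X : set 'rV[R]_d} {f : 'rV[R]_d -> R}.
Context {t : nat} {xs : 'I_t -> 'rV[R]_d}.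
Hypothesis Xxs : forall i, X (xs i).

Lemma le_accept_region {eps eps' : R} : eps <= eps' ->
  accept_region X f xs eps `<=` accept_region X f xs eps'.
Proof.
move=> le_eps x [Xx accx]; split=> // i j; apply: le_trans (accx i j) _.
by rewrite lerD2l ler_wpM2r ?enorm_ge0.
Qed.

Context {k : R}.

Lemma potential_max_sub_accept_region :
  potential_max X f xs k `<=` accept_region X f xs k.
Proof.
move=> x [Xx [g [[Lg g_xs] [_ g_max]]]]; split=> // i j.
rewrite -!g_xs; apply: le_trans (g_max _ (Xxs j)) _.
by move/Lip_onP: Lg; apply.
Qed.

Hypotheses (k_ge0 : 0 <= k) (Lf : Lip_on X k f).

(* McShane's extension of f from the xs i, the largest function in
   [consistent_funs X f xs k], truncated at level c. *)
Definition capped_upper_envelope (c : R) (y : 'rV[R]_d) : R :=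
  \big[Num.min/c]_i (f (xs i) + k * enorm (y - xs i)).

Lemma capped_upper_envelope_consistent (c : R) : (forall j, f (xs j) <= c) ->
  consistent_funs X f xs k (capped_upper_envelope c).
Proof.
move=> f_le_c; split; first by apply: Lip_on_bigmin => // i; exact: Lip_on_cone.
move=> i; apply/eqP; rewrite eq_le; apply/andP; split.
  by rewrite (le_trans (bigmin_le _ i _)) // subrr enorm0 mulr0 addr0.
apply: le_bigmin => // j _.
by move/Lip_onP: Lf; apply.
Qed.

Lemma accept_region_sub_potential_max :
  accept_region X f xs k `<=` potential_max X f xs k.
Proof.
move=> x [Xx accx]; split=> //.
have [c [f_le_c c_le]] := exists_between accx.
exists (capped_upper_envelope c); split; first exact: capped_upper_envelope_consistent.
have env_x : capped_upper_envelope c x = c.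
  by apply/eqP; rewrite eq_le bigmin_le_id; apply: le_bigmin.
by split=> // x' _; rewrite env_x; exact: bigmin_le_id.
Qed.

End AcceptanceRegion.

Theorem proposition2 (R : realType) (d : nat) (X : set 'rV[R]_d)
    (k : R) (f : 'rV[R]_d -> R) (t : nat) (xs : 'I_t -> 'rV[R]_d) :
  convex_set (X : set (convex_lmodType 'rV[R]_d)) ->
  compact X ->
  X° !=set0 ->
  0 <= k ->
  Lip_on X k f ->
  (0 < t)%N ->
  (forall i, X (xs i)) ->
  (forall eps : R, 0 < eps -> eps <= k ->
     accept_region X f xs eps `<=` potential_max X f xs k) /\
  (forall eps : R, k < eps ->
     potential_max X f xs k `<=` accept_region X f xs eps).
Proof.
move=> _ _ _ k_ge0 Lf _ Xxs; split=> [eps _ le_eps_k x | eps lt_k_eps x].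
  by move/(le_accept_region le_eps_k)/(accept_region_sub_potential_max Xxs k_ge0 Lf).
by move/(potential_max_sub_accept_region Xxs)/(le_accept_region (ltW lt_k_eps)).
Qed.
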